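(* Let $G=(V,E;w)$ be a finite simple graph with positive edge weights. The matching game $\Gamma_G$ is population monotonic if and only if every connected component of $G$ with at least two vertices is a double-star whose two centers $u,v$ (for a suitable choice of the double-star decomposition) form a dominant pair.
   Context: $G=(V,E;w)$ is a finite simple graph with edge weights $w:E\to\mathbb{R}$, $w_e>0$ for all $e\in E$; $w_{ij}$ is the weight of edge $ij$. The matching game on $G$ is the cooperative game $\Gamma_G=(N,\gamma)$ with $N=V$ and $\gamma(S)$ the maximum weight of a matching in $G[S]$ ($\gamma(\emptyset)=0$). A population monotonic allocation scheme (PMAS) is a family $(\boldsymbol{x}_S)_{\emptyset\neq S\subseteq N}$, $\boldsymbol{x}_S=(x_{S,i})_{i\in S}\in\mathbb{R}^S$, with (efficiency) $\sum_{i\in S}x_{S,i}=\gamma(S)$ for all nonempty $S$ and (monotonicity) $x_{S,i}\le x_{T,i}$ whenever $\emptyset\ne S\subseteq T\subseteq N$, $i\in S$; $\Gamma_G$ is population monotonic if it admits a PMAS. A double-star is a graph whose vertex set is partitioned into a set $K=\{u,v\}$ of two adjacent vertices (the centers) and an independent set $I$, such that every vertex of $I$ is adjacent to at least one of $u,v$ (so all edges lie within $K$ or between $K$ and $I$; a star with at least one edge is a double-star, taking as centers the star's center and one leaf). Adjacent vertices $u,v$ form a dominant pair if $w_{uv}\ge w_{uu'}+w_{vv'}$ for all edges $uu'\ne uv$ and $vv'\ne uv$ (with $u'=v'$ allowed), and moreover, if one of them, say $v$, has no incident edge other than $uv$, then $w_{uv}\ge w_{uu'}$ for every edge $uu'\ne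 uv$; equivalently, $w_{uv}\ge\sigma_u+\sigma_v$ where $\sigma_u$ (resp. $\sigma_v$) is the maximum weight of an edge other than $uv$ incident to $u$ (resp. $v$), or $0$ if none exists. *)

From mathcomp Require Import all_boot all_order all_algebra.
Set Implicit Arguments. Unset Strict Implicit. Unset Printing Implicit Defensive.
Import Order.TTheory GRing.Theory Num.Theory.
Local Open Scope ring_scope.

(* A graph on the finite vertex type T is given by an adjacency relation e
   (assumed symmetric and irreflexive in the theorem), and edge weights by
   w : T -> T -> R (only the values w x y with e x y matter; w x y is the
   weight of the edge xy). *)

Section Matching.
Variables (R : realFieldType) (T : finType) (e : rel T) (w : T -> T -> R).

(* A matching of G[S], given as a set M of oriented pairs (x,y), each one an
   edge xy of G with both ends in S, such that distinct pairs of M have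
   disjoint sets of endpoints (so each edge appears in at most one
   orientation and each vertex is covered at most once). *)
Definition is_matching (S : {set T}) (M : {set T * T}) : bool :=
  [forall p in M, [&& e p.1 p.2, p.1 \in S & p.2 \in S]] &&
  [forall p in M, forall q in M,
     (p != q) ==> [disjoint [set p.1; p.2] & [set q.1; q.2]]].

Definition matching_weight (M : {set T * T}) : R :=
  \sum_(p in M) w p.1 p.2.

(* gamma(S): maximum weight of a matching in G[S] (the empty matching has
   weight 0, so 0 is a valid neutral element). *)
Definition gamma (S : {set T}) : R :=
  \big[Num.max/0]_(M : {set T * T} | is_matching S M) matching_weight M.

Definition is_PMAS (x : {set T} -> T -> R) : Prop :=
  (forall S : {set T}, S != set0 -> \sum_(i in S) x S i = gamma S) /\
  (forall (S U : {set T}) (i : T), S \subset U -> i \in S -> x S i <= x U i).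

Definition population_monotonic : Prop := exists x, is_PMAS x.

Definition component (a : T) : {set T} := [set b | connect e a b].

(* The vertex set C (a connected component) induces a double-star with
   centers u, v: u,v adjacent in C, every other vertex of C adjacent to
   u or v, and every edge inside C has an endpoint in {u,v} (so
   I = C \ {u,v} is independent). *)
Definition double_star_on (C : {set T}) (u v : T) : Prop :=
  [/\ u \in C, v \in C, e u v,
      (forall x, x \in C -> [|| x == u, x == v, e x u | e x v]) &
      (forall x y, x \in C -> y \in C -> e x y ->
         [|| x == u, x == v, y == u | y == v])].

Definition dominant_pair (u v : T) : Prop :=
  [/\ e u v,
      (forall u' v', e u u' -> u' != v -> e v v' -> v' != u ->
         w u u' + w v v' <= w u v),
      ((forall v', e v v' -> v' = u) -> forall u', e u u' -> w u u' <= w u v) &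
      ((forall u', e u u' -> u' = v) -> forall v', e v v' -> w v v' <= w u v)].

End Matching.

From mathcomp Require Import all_boot all_order all_algebra.
From mathcomp Require Import lra.
From Stdlib Require Import ClassicalEpsilon.
Set Implicit Arguments. Unset Strict Implicit. Unset Printing Implicit Defensive.
Import Order.TTheory GRing.Theory Num.Theory.
Local Open Scope ring_scope.

(* Necessity.  Given a PMAS x and a connected component C with at least two
   vertices, pick an edge ab of maximum weight in C.  Comparing the
   allocations of the coalitions {a,b}, {a,b,z} and {a,z}, monotonicity and
   efficiency force x_{a,z}(z) = 0 and w(az) <= x_{a,b}(a) for every other
   neighbour z of a; the coalition {a,y,y'} then rules out any path a-y-y'
   leaving {a,b}.  Hence C is a double-star with centers a,b, and adding the
   two bounds w(az) <= x_{a,b}(a), w(bz') <= x_{a,b}(b) gives dominance.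

   Sufficiency.  In each component choose dominant centers u,v and give
   u the amount w(uv) - sigma_v and v the amount sigma_v when both are
   present, a lone center the heaviest edge it has into the coalition, and
   every other vertex nothing.  This scheme is nonnegative and monotone; it
   covers every edge (so its total bounds gamma from above, by a matching
   argument) and on each component its total is the weight of a single edge
   (so, by superadditivity of gamma over components, it is bounded by gamma). *)

Lemma sum_setU_disjoint (R : nmodType) (I : finType) (A B : {set I}) (F : I -> R) :
  [disjoint A & B] -> \sum_(i in A :|: B) F i = \sum_(i in A) F i + \sum_(i in B) F i.
Proof. by move=> dAB; rewrite -bigU //; apply: eq_bigl => i; rewrite !inE. Qed.

Lemma mem_neq0 (I : finType) (A : {set I}) a : a \in A -> A != set0.
Proof. by move=> aA; apply/set0Pn; exists a. Qed.

Lemma sum_pair_support (R : nmodType) (I : finType) (A : {set I}) (F : I -> R) u v :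
  u != v -> (forall j, j \in A -> j != u -> j != v -> F j = 0) ->
  \sum_(j in A) F j = (if u \in A then F u else 0) + (if v \in A then F v else 0).
Proof.
move=> uv F0; rewrite (bigID (mem [set u; v])) /= [X in _ + X]big1 => [|j /andP [jA]]; last first.
  by rewrite !inE => /norP [ju jv]; apply: F0.
rewrite addr0 (eq_bigl (fun j => (j \in [set u; v]) && (j \in A))) => [|j]; last by rewrite andbC.
by rewrite big_mkcondr big_setU1 ?inE //= big_set1.
Qed.

Section MatchingGame.
Variables (R : realFieldType) (T : finType) (e : rel T) (w : T -> T -> R).
Hypotheses (esym : symmetric e) (eirr : irreflexive e)
  (wsym : forall x y, e x y -> w x y = w y x)
  (wpos : forall x y, e x y -> 0 < w x y).

Local Notation gam := (gamma e w).

Lemma edge_neq a b : e a b -> a != b.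
Proof. by apply: contraTneq => ->; rewrite eirr. Qed.

Lemma in_triple (a b c p : T) : p \in [set a; b; c] -> [\/ p = a, p = b | p = c].
Proof. by rewrite !inE => /orP [/orP [] | ] /eqP ->; constructor. Qed.

Lemma triple_edge a b c p q : e p q -> p \in [set a; b; c] -> q \in [set a; b; c] ->
  [\/ e a b /\ w p q = w a b, e a c /\ w p q = w a c | e b c /\ w p q = w b c].
Proof.
move=> epq /in_triple pin /in_triple qin.
case: pin epq => ->; case: qin => -> epq; rewrite ?eirr // in epq;
  first [ by [apply: Or31 | apply: Or32 | apply: Or33]
        | rewrite wsym //; rewrite esym in epq; by [apply: Or31 | apply: Or32 | apply: Or33]].
Qed.

Lemma pair_sub_triple (a b c p q : T) :
  p \in [set a; b; c] -> q \in [set a; b; c] -> [set p; q] \subset [set a; b; c].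
Proof. by move=> pin qin; apply/subsetP => z /set2P [] ->. Qed.

Lemma matching_edge (S : {set T}) M p : is_matching e S M -> p \in M ->
  [&& e p.1 p.2, p.1 \in S & p.2 \in S].
Proof. by case/andP => /forallP h _ pM; move/implyP: (h p); apply. Qed.

Lemma matching_disjoint (S : {set T}) M p q : is_matching e S M -> p \in M -> q \in M ->
  p != q -> [disjoint [set p.1; p.2] & [set q.1; q.2]].
Proof.
case/andP => _ /forallP h pM qM.
by move/implyP: (h p) => /(_ pM) /forallP /(_ q) /implyP /(_ qM) /implyP.
Qed.

Lemma matching_shared_end (S : {set T}) M p q z : is_matching e S M -> p \in M -> q \in M ->
  z \in [set p.1; p.2] -> z \in [set q.1; q.2] -> p = q.
Proof.
move=> hM pM qM zp; apply: contraTeq => pq.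
by rewrite (disjointFr (matching_disjoint hM pM qM pq) zp).
Qed.

Lemma matching_single (S : {set T}) a b : e a b -> a \in S -> b \in S ->
  is_matching e S [set (a, b)].
Proof.
move=> eab aS bS; apply/andP; split; apply/forallP => p; apply/implyP => /set1P -> /=.
  by rewrite eab aS bS.
by apply/forallP => q; apply/implyP => /set1P ->; rewrite eqxx.
Qed.

Lemma matching_sub (A B : {set T}) M : A \subset B -> is_matching e A M -> is_matching e B M.
Proof.
move=> sAB /andP [/forallP h1 h2]; apply/andP; split => //.
apply/forallP => p; apply/implyP => pM; move/implyP: (h1 p) => /(_ pM) /and3P [-> p1 p2].
by rewrite !(subsetP sAB).
Qed.

Lemma matching_union (A B : {set T}) MA MB : [disjoint A & B] ->
  is_matching e A MA -> is_matching e B MB -> is_matching e (A :|: B) (MA :|: MB).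
Proof.
move=> dAB hA hB; apply/andP; split.
  apply/forallP => p; apply/implyP; rewrite inE => /orP [pM|pM].
    by case/and3P: (matching_edge hA pM) => -> p1 p2; rewrite !inE p1 p2.
  by case/and3P: (matching_edge hB pM) => -> p1 p2; rewrite !inE p1 p2 !orbT.
have ends_in S M p : is_matching e S M -> p \in M -> [set p.1; p.2] \subset S.
  by move=> hM pM; case/and3P: (matching_edge hM pM) => _ p1 p2; apply/subsetP => z /set2P [] ->.
apply/forallP => p; apply/implyP => pin; apply/forallP => q; apply/implyP => qin.
apply/implyP => pq; move: pin qin; rewrite !inE => /orP [pM|pM] /orP [qM|qM].
- exact: matching_disjoint hA pM qM pq.
- exact: disjointWl (ends_in _ _ _ hA pM) (disjointWr (ends_in _ _ _ hB qM) dAB).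
- rewrite disjoint_sym.
  exact: disjointWl (ends_in _ _ _ hA qM) (disjointWr (ends_in _ _ _ hB pM) dAB).
- exact: matching_disjoint hB pM qM pq.
Qed.

Lemma matching_small (S : {set T}) M : (#|S| <= 3)%N -> is_matching e S M ->
  M = set0 \/ exists2 p, p \in M & M = [set p].
Proof.
move=> cS hM; case: (set_0Vmem M) => [->|[p pM]]; [by left | right; exists p => //].
apply/setP => q; rewrite inE; apply/idP/eqP => [qM|->//]; apply/eqP; apply/negPn/negP => qp.
case/and3P: (matching_edge hM pM) => ep p1 p2; case/and3P: (matching_edge hM qM) => eq q1 q2.
have sub : [set q.1; q.2] :|: [set p.1; p.2] \subset S.
  by apply/subsetP => z; rewrite !inE => /orP [/orP [] | /orP []] /eqP ->.
have := leq_trans (subset_leq_card sub) cS.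
by rewrite cardsU (disjoint_setI0 (matching_disjoint hM qM pM qp)) cards0 subn0
  !cards2 (edge_neq ep) (edge_neq eq).
Qed.

Lemma matching_weight_small (S : {set T}) M : (#|S| <= 3)%N -> is_matching e S M ->
  matching_weight w M = 0 \/
  exists a b, [/\ e a b, a \in S, b \in S & matching_weight w M = w a b].
Proof.
move=> cS hM; case: (matching_small cS hM) => [->|[p pM ->]].
  by left; rewrite /matching_weight big_set0.
right; case/and3P: (matching_edge hM pM) => ep p1 p2.
by exists p.1, p.2; rewrite /matching_weight big_set1.
Qed.

Lemma gamma_ge (S : {set T}) M : is_matching e S M -> matching_weight w M <= gam S.
Proof. by move=> hM; apply: le_bigmax_cond. Qed.

Lemma gamma_ge0 (S : {set T}) : 0 <= gam S.
Proof. exact: bigmax_ge_id. Qed.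

Lemma gamma_le (S : {set T}) c : 0 <= c ->
  (forall M, is_matching e S M -> matching_weight w M <= c) -> gam S <= c.
Proof. exact: bigmax_le. Qed.

Lemma gamma_edge (S : {set T}) a b : e a b -> a \in S -> b \in S -> w a b <= gam S.
Proof.
move=> eab aS bS; have := gamma_ge (matching_single eab aS bS).
by rewrite /matching_weight big_set1.
Qed.

Lemma gamma_mono (A B : {set T}) : A \subset B -> gam A <= gam B.
Proof.
move=> sAB; apply: gamma_le (gamma_ge0 B) _ => M hM.
exact/gamma_ge/(matching_sub sAB).
Qed.

Lemma gamma_super (A B : {set T}) : [disjoint A & B] -> gam A + gam B <= gam (A :|: B).
Proof.
move=> dAB.
have both MA MB : is_matching e A MA -> is_matching e B MB ->
    matching_weight w MA + matching_weight w MB <= gam (A :|: B).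
  move=> hA hB; rewrite /matching_weight -sum_setU_disjoint.
    exact: gamma_ge (matching_union dAB hA hB).
  rewrite -setI_eq0; apply/eqP/setP => p; rewrite !inE; apply/negP => /andP [pA pB].
  case/and3P: (matching_edge hA pA) => _ p1 _; case/and3P: (matching_edge hB pB) => _ p1' _.
  by rewrite (disjointFr dAB p1) in p1'.
suff : gam A <= gam (A :|: B) - gam B by lra.
apply: gamma_le => [|MA hA]; first by have := gamma_mono (subsetUr A B); lra.
suff : gam B <= gam (A :|: B) - matching_weight w MA by lra.
apply: gamma_le => [|MB hB]; last by have := both MA MB hA hB; lra.
by have := gamma_ge (matching_sub (subsetUl A B) hA); lra.
Qed.

Lemma gamma_small (S : {set T}) c : (#|S| <= 3)%N -> 0 <= c ->
  (forall a b, e a b -> a \in S -> b \in S -> w a b <= c) -> gam S <= c.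
Proof.
move=> cS c0 hc; apply: gamma_le => // M hM.
by case: (matching_weight_small cS hM) => [->|[a [b [eab aS bS ->]]]]; last exact: hc.
Qed.

Lemma gamma_small_lt (S : {set T}) c : (#|S| <= 3)%N -> 0 < c ->
  (forall a b, e a b -> a \in S -> b \in S -> w a b < c) -> gam S < c.
Proof.
move=> cS c0 hc; apply: bigmax_lt => // M hM.
by case: (matching_weight_small cS hM) => [->|[a [b [eab aS bS ->]]]]; last exact: hc.
Qed.

Lemma card_triple (a b c : T) : (#|[set a; b; c]| <= 3)%N.
Proof. by rewrite setUC cardsU1 cards2; case: (_ \notin _); case: (a != b). Qed.

Lemma gamma_single i : gam [set i] = 0.
Proof.
apply/eqP; rewrite eq_le gamma_ge0 andbT; apply: gamma_small => //; first by rewrite cards1.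
by move=> a b eab /set1P ea /set1P eb; move: eab; rewrite ea eb eirr.
Qed.

Lemma gamma_pair a b : e a b -> gam [set a; b] = w a b.
Proof.
move=> eab; apply/eqP; rewrite eq_le gamma_edge ?set21 ?set22 // andbT.
apply: gamma_small (ltW (wpos eab)) _; first by rewrite cards2; case: (a != b).
move=> x y exy /set2P [] ? /set2P [] ?; subst x y;
  first [by rewrite eirr in exy | exact: lexx | by rewrite wsym // lexx].
Qed.

Lemma component_self a : a \in component e a.
Proof. by rewrite inE connect0. Qed.

Lemma component_closed a z y : z \in component e a -> e z y -> y \in component e a.
Proof. by rewrite !inE => h ezy; apply: connect_trans h (connect1 ezy). Qed.

Lemma component_eq i j : connect e i j -> component e j = component e i.
Proof.
move=> h; apply/setP => z; rewrite !inE.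
by rewrite (same_connect (sym_connect_sym esym) h).
Qed.

Lemma component_invariant (P : pred T) a : P a -> (forall y z, P y -> e y z -> P z) ->
  forall y, y \in component e a -> P y.
Proof.
move=> Pa hP y; rewrite inE => /connectP [p hp ->] {y}.
by elim: p a Pa hp => //= z p IH a Pa /andP [eaz hp]; apply: IH (hP _ _ Pa eaz) hp.
Qed.

Lemma component_edge a : (1 < #|component e a|)%N -> exists b, e a b.
Proof.
move=> hC; have : ~~ (component e a \subset [set a]).
  by apply: contraTN hC => /subset_leq_card; rewrite cards1 -leqNgt.
case/subsetPn => b; rewrite !inE => /connectP [[|c p] hp ->] /=; first by rewrite eqxx.
by case/andP: hp => eac _ _; exists c.
Qed.

Section Necessity.
Variable x : {set T} -> T -> R.
Hypothesis hx : is_PMAS e w x.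

(* Monotonicity and efficiency of x on one, two and three vertices; in
   particular all shares are nonnegative since gamma of a singleton is 0. *)
Lemma pmas_mono (S U : {set T}) i : S \subset U -> i \in S -> x S i <= x U i.
Proof. by case: hx => _; apply. Qed.

Lemma pmas_ge0 (S : {set T}) i : i \in S -> 0 <= x S i.
Proof.
move=> iS; case: hx => eff _.
have := eff [set i] (mem_neq0 (set11 i)); rewrite big_set1 gamma_single => <-.
by apply: pmas_mono; rewrite ?sub1set ?set11.
Qed.

Lemma pmas_pair a b : e a b -> x [set a; b] a + x [set a; b] b = w a b.
Proof.
move=> eab; case: hx => eff _.
have := eff [set a; b] (mem_neq0 (set21 a b)); rewrite big_setU1 ?big_set1 ?inE ?edge_neq //.
by rewrite gamma_pair.
Qed.

Lemma pmas_triple a b c : a != b -> a != c -> b != c ->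
  x [set a; b; c] a + x [set a; b; c] b + x [set a; b; c] c = gam [set a; b; c].
Proof.
move=> ab ac bc; case: hx => eff _.
have aS : a \in [set a; b; c] by rewrite !inE eqxx.
rewrite -(eff _ (mem_neq0 aS)) sum_setU_disjoint; last first.
  by rewrite disjoint_sym disjoints1 !inE !(eq_sym c) negb_or ac bc.
by rewrite big_setU1 ?inE // !big_set1.
Qed.

Lemma pmas_mono_triple a b c p q i : p \in [set a; b; c] -> q \in [set a; b; c] ->
  i \in [set p; q] -> x [set p; q] i <= x [set a; b; c] i.
Proof. by move=> pin qin; apply: pmas_mono; apply: pair_sub_triple. Qed.

Variable a0 : T.
Local Notation C := (component e a0).

Definition heaviest (a b : T) : Prop := forall p q, e p q -> p \in C -> w p q <= w a b.

Lemma heaviest_sym a b : e a b -> heaviest a b -> heaviest b a.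
Proof. by move=> eab hab p q epq pC; rewrite -(wsym eab); apply: hab. Qed.

Lemma heaviest_exists : (1 < #|C|)%N -> exists u v, [/\ e u v, u \in C & heaviest u v].
Proof.
move=> hC; have [c eac] := component_edge hC.
pose P := fun p : T * T => e p.1 p.2 && (p.1 \in C).
have Pac : P (a0, c) by rewrite /P /= eac component_self.
case: (arg_maxP (fun p : T * T => w p.1 p.2) Pac) => [[u v]] /andP [/= euv uC] hmax.
by exists u, v; split => // p q epq pC; apply: (hmax (p, q)); rewrite /P /= epq pC.
Qed.

(* Adding a third vertex z of C to the heaviest edge ab does not change gamma,
   so z receives nothing and a keeps its share. *)
Lemma heavy_third a b z : e a b -> a \in C -> heaviest a b ->
  z != a -> z != b -> z \in C ->
  x [set a; b; z] z = 0 /\ x [set a; b; z] a = x [set a; b] a.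
Proof.
move=> eab aC hab za zb zC.
have ab := edge_neq eab; have bC := component_closed aC eab.
have hsum : x [set a; b; z] a + x [set a; b; z] b + x [set a; b; z] z = gam [set a; b; z].
  by apply: pmas_triple; rewrite // eq_sym.
have hg : gam [set a; b; z] <= w a b.
  apply: gamma_small (card_triple a b z) (ltW (wpos eab)) _ => p q epq /in_triple pin _.
  by apply: hab => //; case: pin => ->.
have hab2 := pmas_pair eab.
have ma : x [set a; b] a <= x [set a; b; z] a.
  by apply: pmas_mono_triple; rewrite !inE eqxx ?orbT.
have mb : x [set a; b] b <= x [set a; b; z] b.
  by apply: pmas_mono_triple; rewrite !inE eqxx ?orbT.
have z0 : 0 <= x [set a; b; z] z by apply: pmas_ge0; rewrite !inE eqxx ?orbT.
split; lra.
Qed.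

Lemma heavy_neighbor a b z : e a b -> a \in C -> heaviest a b -> e a z -> z != b ->
  x [set a; z] z = 0 /\ w a z <= x [set a; b] a.
Proof.
move=> eab aC hab eaz zb.
have za : z != a by rewrite eq_sym edge_neq.
have [z0 same_a] := heavy_third eab aC hab za zb (component_closed aC eaz).
have mz : x [set a; z] z <= x [set a; b; z] z.
  by apply: pmas_mono_triple; rewrite !inE eqxx ?orbT.
have ma : x [set a; z] a <= x [set a; b; z] a.
  by apply: pmas_mono_triple; rewrite !inE eqxx ?orbT.
have nz : 0 <= x [set a; z] z by apply: pmas_ge0; rewrite !inE eqxx ?orbT.
have := pmas_pair eaz; split; lra.
Qed.

(* No path a - y - z leaves the heaviest edge ab: the coalition {a,y,z}
   would receive more than its value. *)
Lemma heavy_no_path a b y z : e a b -> a \in C -> heaviest a b ->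
  e a y -> y != b -> e y z -> z != a -> z != b -> False.
Proof.
move=> eab aC hab eay yb eyz za zb.
pose X3 := x [set a; y; z].
have hsum : X3 a + X3 y + X3 z = gam [set a; y; z].
  by apply: pmas_triple; [exact: edge_neq eay | rewrite eq_sym | exact: edge_neq eyz].
have [y0 _] := heavy_neighbor eab aC hab eay yb.
have ma : x [set a; y] a <= X3 a by apply: pmas_mono_triple; rewrite !inE eqxx ?orbT.
have my : x [set y; z] y <= X3 y by apply: pmas_mono_triple; rewrite !inE eqxx ?orbT.
have mz : x [set y; z] z <= X3 z by apply: pmas_mono_triple; rewrite !inE eqxx ?orbT.
have say := pmas_pair eay; have syz := pmas_pair eyz.
have pay := wpos eay; have pyz := wpos eyz.
have hlt : gam [set a; y; z] < X3 a + X3 y + X3 z.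
  apply: gamma_small_lt (card_triple a y z) _ _; first lra.
  move=> p q epq pin qin; case: (triple_edge epq pin qin) => [[_ ->]|[eaz ->]|[_ ->]].
  - lra.
  - have [z0 _] := heavy_neighbor eab aC hab eaz zb.
    have maz : x [set a; z] a <= X3 a by apply: pmas_mono_triple; rewrite !inE eqxx ?orbT.
    have := pmas_pair eaz; lra.
  - lra.
by rewrite hsum ltxx in hlt.
Qed.

Definition near (u v y : T) : bool := [|| y == u, y == v, e y u | e y v].

Lemma heavy_two_steps u v y z : e u v -> u \in C -> heaviest u v ->
  e y u || e y v -> y != u -> y != v -> e y z -> (z == u) || (z == v).
Proof.
move=> euv uC huv hy yu yv eyz; apply: contraT => /norP [zu zv]; exfalso.
case/orP: hy => [eyu | eyv].
  by apply: (heavy_no_path euv uC huv _ yv eyz zu zv); rewrite esym.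
have evu : e v u by rewrite esym.
apply: (heavy_no_path evu (component_closed uC euv) (heaviest_sym euv huv) _ yu eyz zv zu).
by rewrite esym.
Qed.

Lemma near_component u v : e u v -> u \in C -> heaviest u v ->
  forall y, y \in C -> near u v y.
Proof.
move=> euv uC huv.
have <- : component e u = C by apply: component_eq; move: uC; rewrite inE.
apply: component_invariant => [|y z hy eyz]; first by rewrite /near eqxx.
case: (eqVneq y u) => [yu|yu]; first by rewrite /near -yu (esym z y) eyz !orbT.
case: (eqVneq y v) => [yv|yv]; first by rewrite /near -yv (esym z y) eyz !orbT.
move: hy; rewrite /near (negbTE yu) (negbTE yv) /= => hy.
by case/orP: (heavy_two_steps euv uC huv hy yu yv eyz) => ->; rewrite ?orbT.
Qed.

Lemma pmas_double_star : (1 < #|C|)%N ->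
  exists u v, double_star_on e C u v /\ dominant_pair e w u v.
Proof.
move=> hC; have [u [v [euv uC huv]]] := heaviest_exists hC.
have vC := component_closed uC euv; have evu : e v u by rewrite esym.
have hvu := heaviest_sym euv huv.
exists u, v; split; first split => //.
- exact: near_component.
- move=> y z yC zC eyz.
  case: (eqVneq y u) => [_|yu] //; case: (eqVneq y v) => [_|yv] //.
  have := near_component euv uC huv yC; rewrite /near (negbTE yu) (negbTE yv) /= => hy.
  exact: heavy_two_steps euv uC huv hy yu yv eyz.
split => // [u' v' euu' u'v evv' v'u | _ u' euu' | _ v' evv'].
- have [_ hu'] := heavy_neighbor euv uC huv euu' u'v.
  have [_ hv'] := heavy_neighbor evu vC hvu evv' v'u.
  have setvu : [set v; u] = [set u; v] by apply/setP => t; rewrite !inE orbC.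
  rewrite setvu in hv'; have := pmas_pair euv; lra.
- exact: huv.
- exact: huv.
Qed.

End Necessity.

(* Sufficiency.  For each component choose, if possible, centers (u,v) making
   it a double-star with dominant pair; the choice depends on the component
   only, hence is shared by all its vertices. *)

Definition centered (C : {set T}) (p : T * T) : Prop :=
  double_star_on e C p.1 p.2 /\ dominant_pair e w p.1 p.2.

Definition centers (C : {set T}) : option (T * T) :=
  match excluded_middle_informative (exists p, centered C p) with
  | left H => Some (proj1_sig (constructive_indefinite_description _ H))
  | right _ => None
  end.

Lemma centersP (C : {set T}) :
  match centers C with Some p => centered C p | None => ~ exists p, centered C p end.
Proof.
rewrite /centers; case: excluded_middle_informative => H //=.
exact: (proj2_sig (constructive_indefinite_description _ H)).
Qed.

(* sigma_v: the largest weight of an edge at v other than vu (0 if none). *)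
Definition side_weight (u v : T) : R := \big[Num.max/0]_(z | e v z && (z != u)) w v z.

Definition best_edge (S : {set T}) (c : T) : R :=
  \big[Num.max/0]_(z | (z \in S) && e c z) w c z.

Definition alloc (S : {set T}) (i : T) : R :=
  match centers (component e i) with
  | Some (u, v) =>
      if i == u then (if v \in S then w u v - side_weight u v else best_edge S u)
      else if i == v then (if u \in S then side_weight u v else best_edge S v)
      else 0
  | None => 0
  end.

Section Dominant.
Variables u v : T.
Hypothesis dp : dominant_pair e w u v.

Lemma dominant_heaviest_u z : e u z -> w u z <= w u v.
Proof.
case: dp => euv dom only_v _ euz.
have [->|zv] := eqVneq z v; first exact: lexx.
have [v' /andP [evv' v'u] | none] := pickP (fun v' => e v v' && (v' != u)).
  by have := dom z v' euz zv evv' v'u; have := wpos evv'; lra.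
apply: only_v euz => v' evv'; apply/eqP.
by have := none v'; rewrite /= evv' => /negbFE.
Qed.

Lemma dominant_heaviest_v z : e v z -> w v z <= w u v.
Proof.
case: dp => euv dom _ only_u evz.
have [->|zu] := eqVneq z u; first by rewrite wsym // esym.
have [u' /andP [euu' u'v] | none] := pickP (fun u' => e u u' && (u' != v)).
  by have := dom u' z euu' u'v evz zu; have := wpos euu'; lra.
apply: only_u evz => u' euu'; apply/eqP.
by have := none u'; rewrite /= euu' => /negbFE.
Qed.

Lemma side_weight_le : side_weight u v <= w u v.
Proof.
case: dp => euv _ _ _; apply: bigmax_le; first exact: ltW (wpos euv).
by move=> z /andP [evz _]; apply: dominant_heaviest_v.
Qed.

Lemma dominant_side_weight z : e u z -> z != v -> w u z + side_weight u v <= w u v.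
Proof.
move=> euz zv; case: dp => euv dom _ _.
suff : side_weight u v <= w u v - w u z by lra.
apply: bigmax_le => [|z' /andP [evz' z'u]]; first by have := dominant_heaviest_u euz; lra.
by have := dom z z' euz zv evz' z'u; lra.
Qed.

End Dominant.

Lemma side_weight_ge u v z : e v z -> z != u -> w v z <= side_weight u v.
Proof. by move=> evz zu; apply: le_bigmax_cond; rewrite evz zu. Qed.

Lemma side_weight_ge0 u v : 0 <= side_weight u v.
Proof. exact: bigmax_ge_id. Qed.

Lemma best_edge_ge0 (S : {set T}) c : 0 <= best_edge S c.
Proof. exact: bigmax_ge_id. Qed.

Lemma best_edge_ge (S : {set T}) c z : z \in S -> e c z -> w c z <= best_edge S c.
Proof. by move=> zS ecz; apply: le_bigmax_cond; rewrite zS ecz. Qed.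

Lemma best_edge_mono (S U : {set T}) c : S \subset U -> best_edge S c <= best_edge U c.
Proof.
move=> sSU; apply: bigmax_le => [|z /andP [zS ecz]]; first exact: best_edge_ge0.
by apply: best_edge_ge; rewrite ?(subsetP sSU).
Qed.

Lemma alloc_ge0 (S : {set T}) i : 0 <= alloc S i.
Proof.
rewrite /alloc; have := centersP (component e i).
case: centers => [[u v] [_ dp]|_] //=.
have sw_le := side_weight_le dp; have sw0 := side_weight_ge0 u v.
have bu0 := best_edge_ge0 S u; have bv0 := best_edge_ge0 S v.
by do !case: ifP => _; lra.
Qed.

Lemma alloc_mono (S U : {set T}) i : S \subset U -> alloc S i <= alloc U i.
Proof.
move=> sSU; rewrite /alloc; have := centersP (component e i).
case: centers => [[u v] [_ dp]|_] //=.
case: ifP => _.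
  case vS: (v \in S); first by rewrite (subsetP sSU v vS).
  case vU: (v \in U); last exact: best_edge_mono.
  apply: bigmax_le => [|z /andP [zS euz]]; first by have := side_weight_le dp; lra.
  have zv : z != v by apply/eqP => zv; rewrite zv vS in zS.
  by have := dominant_side_weight dp euz zv; lra.
case: ifP => _; last exact: lexx.
case uS: (u \in S); first by rewrite (subsetP sSU u uS).
case uU: (u \in U); last exact: best_edge_mono.
apply: bigmax_le => [|z /andP [zS evz]]; first exact: side_weight_ge0.
by apply: side_weight_ge => //; apply/eqP => zu; rewrite zu uS in zS.
Qed.

Section CenteredComponent.
Variables u v : T.
Hypothesis hu : centers (component e u) = Some (u, v).

Lemma centers_centered : centered (component e u) (u, v).
Proof. by have := centersP (component e u); rewrite hu. Qed.

Lemma centers_edge : e u v.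
Proof. by case: centers_centered => [[]]. Qed.

Lemma centers_dominant : dominant_pair e w u v.
Proof. by case: centers_centered. Qed.

Lemma centers_at i : i \in component e u -> centers (component e i) = Some (u, v).
Proof. by rewrite inE => /component_eq ->. Qed.

Lemma alloc_u (S : {set T}) :
  alloc S u = if v \in S then w u v - side_weight u v else best_edge S u.
Proof. by rewrite /alloc hu eqxx. Qed.

Lemma alloc_v (S : {set T}) : alloc S v = if u \in S then side_weight u v else best_edge S v.
Proof.
have vC : v \in component e u by apply: component_closed (component_self u) centers_edge.
by rewrite /alloc (centers_at vC) eq_sym (negbTE (edge_neq centers_edge)) eqxx.
Qed.

Lemma alloc_other (S : {set T}) i : i \in component e u -> i != u -> i != v -> alloc S i = 0.
Proof. by move=> iC iu iv; rewrite /alloc (centers_at iC) (negbTE iu) (negbTE iv). Qed.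

Lemma alloc_cover_u (S : {set T}) z : e u z -> u \in S -> z \in S ->
  w u z <= alloc S u + alloc S z.
Proof.
move=> euz uS zS; have z0 := alloc_ge0 S z.
have [zv|zv] := eqVneq z v; first by rewrite zv in zS *; rewrite alloc_u alloc_v zS uS; lra.
rewrite alloc_u; case: ifP => _; last by have := best_edge_ge zS euz; lra.
by have := dominant_side_weight centers_dominant euz zv; lra.
Qed.

Lemma alloc_cover_v (S : {set T}) z : e v z -> v \in S -> z \in S ->
  w v z <= alloc S v + alloc S z.
Proof.
move=> evz vS zS; have z0 := alloc_ge0 S z.
have [zu|zu] := eqVneq z u.
  by rewrite zu in zS evz *; rewrite alloc_u alloc_v zS vS wsym //; lra.
rewrite alloc_v; case: ifP => _; last by have := best_edge_ge zS evz; lra.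
by have := side_weight_ge evz zu; lra.
Qed.

(* Within the component, the total share of a coalition is the weight of a
   single edge of it (or 0), hence at most its value. *)
Lemma alloc_component_le (A : {set T}) : A \subset component e u ->
  \sum_(j in A) alloc A j <= gam A.
Proof.
move=> sA; have euv := centers_edge.
rewrite (sum_pair_support (edge_neq euv)) => [|j jA]; last exact: alloc_other (subsetP sA j jA).
rewrite alloc_u alloc_v; case uA: (u \in A); case vA: (v \in A).
- by have := gamma_edge euv uA vA; lra.
- rewrite addr0; apply: bigmax_le (gamma_ge0 A) _ => z /andP [zA euz].
  exact: gamma_edge.
- rewrite add0r; apply: bigmax_le (gamma_ge0 A) _ => z /andP [zA evz].
  exact: gamma_edge.
- by rewrite addr0 gamma_ge0.
Qed.

End CenteredComponent.

Lemma alloc_within_component (A : {set T}) i : A \subset component e i ->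
  \sum_(j in A) alloc A j <= gam A.
Proof.
move=> sA; have := centersP (component e i).
case hi: (centers (component e i)) => [[u v]|] => [[[/= uC _ _ _ _] _]|_].
  have cu : component e u = component e i by move: uC; rewrite inE => /component_eq.
  have hu : centers (component e u) = Some (u, v) by rewrite cu.
  by apply: (alloc_component_le hu); rewrite cu.
rewrite big1 ?gamma_ge0 // => j jA.
by move: (subsetP sA j jA); rewrite /alloc inE => /component_eq ->; rewrite hi.
Qed.

Lemma alloc_local (S S' : {set T}) i :
  (forall z, z \in component e i -> (z \in S) = (z \in S')) -> alloc S i = alloc S' i.
Proof.
move=> hS; rewrite /alloc; have := centersP (component e i).
case: centers => [[u v] [[uC vC _ _ _] _]|_] //=.
have best_eq c : c \in component e i -> best_edge S c = best_edge S' c.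
  move=> cC; apply: eq_bigl => z; case ecz: (e c z); last by rewrite !andbF.
  by rewrite !andbT hS // (component_closed cC ecz).
by rewrite (hS u uC) (hS v vC) !best_eq.
Qed.

(* The total share of any coalition is at most its value: split the coalition
   along the component of one of its vertices and use superadditivity. *)
Lemma alloc_sum_le (S : {set T}) : \sum_(i in S) alloc S i <= gam S.
Proof.
have [n] := ubnP #|S|; elim: n S => // n IH S hS.
case: (set_0Vmem S) => [-> | [i iS]]; first by rewrite big_set0 gamma_ge0.
set Ci := component e i; set SC := S :&: Ci; set SD := S :\: Ci.
have inC j : j \in Ci -> component e j = Ci by rewrite inE => /component_eq.
have shareC : \sum_(j in SC) alloc S j = \sum_(j in SC) alloc SC j.
  apply: eq_bigr => j; rewrite inE => /andP [_ jC].
  by apply: alloc_local => z; rewrite (inC j jC) => zC; rewrite inE zC andbT.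
have shareD : \sum_(j in SD) alloc S j = \sum_(j in SD) alloc SD j.
  apply: eq_bigr => j; rewrite inE => /andP [jC _].
  apply: alloc_local => z zj; rewrite inE; suff -> : (z \in Ci) = false by [].
  by apply: contraNF jC => zC; rewrite -(inC z zC) inE (sym_connect_sym esym) -inE.
have leC : \sum_(j in SC) alloc SC j <= gam SC.
  exact: (alloc_within_component (i := i) (subsetIr S Ci)).
have leD : \sum_(j in SD) alloc SD j <= gam SD.
  apply: IH; rewrite ltnS in hS; apply: leq_trans hS; apply: proper_card.
  by apply/properP; split; [exact: subsetDl | exists i => //; rewrite !inE connect0].
have dS : [disjoint SC & SD].
  by apply/pred0P => z /=; rewrite !inE; case: (connect e i z); rewrite ?andbF.
rewrite (big_setID Ci) /= -/SC -/SD shareC shareD.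
by have := gamma_super dS; rewrite /SC /SD setID; lra.
Qed.

(* The pairs of a matching have pairwise distinct ends, so summing a
   nonnegative function over both ends of its edges stays below its sum over
   the coalition. *)
Lemma matching_ends_sum (S : {set T}) M (f : T -> R) : (forall i, 0 <= f i) ->
  is_matching e S M -> \sum_(p in M) (f p.1 + f p.2) <= \sum_(i in S) f i.
Proof.
move=> f0 hM; set E1 := [set p.1 | p in M]; set E2 := [set p.2 | p in M].
have inj1 : {in M &, injective (fun p : T * T => p.1)}.
  move=> p q pM qM /= h.
  by apply: (matching_shared_end (z := p.1) hM pM qM); rewrite ?h !inE eqxx.
have inj2 : {in M &, injective (fun p : T * T => p.2)}.
  move=> p q pM qM /= h; apply: (matching_shared_end (z := p.2) hM pM qM).
    by rewrite !inE eqxx orbT.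
  by rewrite h !inE eqxx orbT.
have dE : [disjoint E1 & E2].
  rewrite -setI_eq0; apply/eqP/setP => z; rewrite !inE; apply/negP.
  case/andP => /imsetP [p pM ->] /imsetP [q qM pq].
  have pq_eq : p = q.
    by apply: (matching_shared_end (z := p.1) hM pM qM); rewrite !inE ?pq eqxx ?orbT.
  case/and3P: (matching_edge hM pM) => ep _ _.
  by move: ep; rewrite pq pq_eq eirr.
have sE : E1 :|: E2 \subset S.
  apply/subsetP => z; rewrite inE => /orP [] /imsetP [p pM ->].
    by case/and3P: (matching_edge hM pM).
  by case/and3P: (matching_edge hM pM).
rewrite big_split /= -(big_imset _ inj1) -(big_imset _ inj2) -sum_setU_disjoint //.
rewrite (big_setID (A := S) (E1 :|: E2)) (setIidPr sE) /= lerDl.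
by apply: sumr_ge0 => i _.
Qed.

Section Sufficiency.
Hypothesis double_stars : forall a : T, (1 < #|component e a|)%N ->
  exists u v, double_star_on e (component e a) u v /\ dominant_pair e w u v.

Lemma centers_of_edge a b : e a b -> exists u v,
  [/\ centers (component e u) = Some (u, v), a \in component e u & b \in component e u].
Proof.
move=> eab; have bC := component_closed (component_self a) eab.
have := centersP (component e a); case ha: (centers (component e a)) => [[u v]|]; last first.
  move=> none; exfalso; apply: none.
  have sub : [set a; b] \subset component e a.
    by apply/subsetP => z /set2P [] ->; [exact: component_self | exact: bC].
  have := subset_leq_card sub; rewrite cards2 (edge_neq eab) => /double_stars.
  by case=> u [v [ds dp]]; exists (u, v).
move=> [[uC _ _ _ _] _].
have cu : component e u = component e a by move: uC; rewrite inE => /component_eq.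
by exists u, v; rewrite cu ha component_self.
Qed.

Lemma alloc_cover (S : {set T}) a b : e a b -> a \in S -> b \in S ->
  w a b <= alloc S a + alloc S b.
Proof.
move=> eab aS bS; have [u [v [hu aC bC]]] := centers_of_edge eab.
have [[_ _ _ _ touch] _] := centers_centered hu.
have eba : e b a by rewrite esym.
move: (touch a b aC bC eab) => /or4P [] /eqP /= ?; subst.
- exact: (alloc_cover_u hu eab aS bS).
- exact: (alloc_cover_v hu eab aS bS).
- by rewrite wsym // addrC; apply: (alloc_cover_u hu eba bS aS).
- by rewrite wsym // addrC; apply: (alloc_cover_v hu eba bS aS).
Qed.

(* Since the scheme covers every edge, every matching weighs at most the total
   share. *)
Lemma gamma_le_alloc (S : {set T}) : gam S <= \sum_(i in S) alloc S i.
Proof.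
apply: gamma_le => [|M hM]; first by apply: sumr_ge0 => i _; exact: alloc_ge0.
apply: le_trans (matching_ends_sum (alloc_ge0 S) hM).
apply: ler_sum => p pM; case/and3P: (matching_edge hM pM) => ep p1 p2.
exact: alloc_cover.
Qed.

Lemma alloc_PMAS : is_PMAS e w alloc.
Proof.
split=> [S _ | S U i sSU _]; last exact: alloc_mono.
by apply/eqP; rewrite eq_le alloc_sum_le gamma_le_alloc.
Qed.

End Sufficiency.
End MatchingGame.

Theorem mainTheorem14 (R : realFieldType) (T : finType) (e : rel T)
  (w : T -> T -> R) :
  symmetric e -> irreflexive e ->
  (forall x y, e x y -> w x y = w y x) ->
  (forall x y, e x y -> 0 < w x y) ->
  (population_monotonic e w <->
   forall a : T, (1 < #|component e a|)%N ->
     exists u v, double_star_on e (component e a) u v /\ dominant_pair e w u v).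
Proof.
move=> esym eirr wsym wpos; split.
- by case=> x hx a; apply: (pmas_double_star esym eirr wsym wpos hx).
- by move=> double_stars; exists (alloc e w); apply: (alloc_PMAS esym eirr wsym wpos).
Qed.
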